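(* For every $d$ with $0\le d\le\rho(m)-1$ and every integer $t$ with $0\le t\le L_1(d)+h-1-\rho(m)$, we have $z(t,d)=y(t)$.
   Context: For $u\in\mathbb{R}$ let $\mathbf 1[u]=1$ if $u\ge 0$ and $\mathbf 1[u]=0$ if $u<0$. Let $m$ be a positive integer and let $\rho(m)$ denote the number of primes $p$ with $2m<p<3m$; assume $\rho(m)\ge 2$. List these primes as $p_0>p_1>\dots>p_{\rho(m)-1}$ and put $\alpha_i=3m-p_i$. Let $k=(6m-1)\rho(m)$, $\mu_i=\lfloor k/p_i\rfloor$, $\beta_i=k-p_i\mu_i$. Define weights $\bar a_j$, $1\le j\le k$: if $\rho(m)$ is even, $\bar a_j=2$ if $j=\ell p_i$ for some $i$ and some $\ell$ with $1\le \ell\le 3\rho(m)/2$, $\bar a_j=-2$ if $j=\ell p_i$ with $3\rho(m)/2<\ell\le 2\rho(m)$, and $\bar a_j=0$ otherwise; if $\rho(m)$ is odd, $\bar a_j=2$ if $j=\ell p_i$ with $1\le\ell\le (3\rho(m)-1)/2$, $\bar a_j=-2$ if $j=\ell p_i$ with $(3\rho(m)+1)/2\le \ell\le 2\rho(m)-2$, $\bar a_j=-1$ if $j=\ell p_i$ with $\ell\in\{2\rho(m)-1,2\rho(m)\}$, and $\bar a_j=0$ otherwise (well defined since the sets $\{\ell p_i:1\le\ell\le2\rho(m)\}$ are pairwise disjoint). Let $\bar\theta=2\rho(m)$. For each $i$ define $x^{\alpha_i}(t)$ for $0\le t\le k-1$ by $x^{\alpha_i}(t)=1$ if $t=\beta_i+\ell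 p_i$ for some $0\le \ell\le\mu_i-1$ and $x^{\alpha_i}(t)=0$ otherwise, and for $t\ge k$ by $x^{\alpha_i}(t)=\mathbf 1\big[\sum_{j=1}^k \bar a_j x^{\alpha_i}(t-j)-\bar\theta\big]$. Let $h=\rho(m)k$. For $1\le f\le h$ let $b_f=\bar a_j$ if $f=\rho(m)j$ with $1\le j\le k$, and $b_f=0$ otherwise. Define $(y(n))_{n\ge0}$ by $y(\rho(m)j+i)=x^{\alpha_i}(1+j)$ for $0\le j\le k-1$, $0\le i\le\rho(m)-1$, and $y(n)=\mathbf 1\big[\sum_{f=1}^h b_f y(n-f)-\bar\theta\big]$ for $n\ge h$. Let $L_1(d)=\rho(m)\cdot\mathrm{lcm}(p_0,\dots,p_d)$ for $0\le d\le\rho(m)-1$. For $0\le d\le\rho(m)-1$ let $B_0(d)=\{f\in\mathbb Z:\ 1\le f\le h-d,\ y(h+L_1(d)-\rho(m)-f)=1\}$, $B_{\ell+1}(d)=\{1+f: f\in B_\ell(d)\}$ for $\ell\ge0$, $A(d)=\bigcup_{\ell=0}^{d}B_\ell(d)$, and $Tot(d)=|B_0(d)|$. Fix a real number $\lambda$ with $-1\le\lambda<0$. Put $\beta(d)=\lambda/Tot(d)$, $\xi(d)=\lambda-\beta(d)/8$, $\theta_2(d)=\bar\theta+\xi(d)$, and for $1\le f\le h$ let $c(f,d)=b_f+\beta(d)$ if $f\in A(d)$ and $c(f,d)=b_f$ otherwise. Define $(z(n,d))_{n\ge0}$ by $z(n,d)=y(n)$ for $0\le n\le h-1$ and $z(n,d)=\mathbf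 1\big[\sum_{f=1}^h c(f,d)\,z(n-f,d)-\theta_2(d)\big]$ for $n\ge h$. *)

From Stdlib Require Import Reals Lra Lia ZArith Arith Bool List Znumtheory.
Import ListNotations.
Open Scope R_scope.

Definition ind (u : R) : nat := if Rle_dec 0 u then 1%nat else 0%nat.

Definition sum1 (K : nat) (g : nat -> R) : R :=
  fold_right Rplus 0 (map g (seq 1 K)).

(** Generic threshold recurrence of order K:
    s(n) = init n for n < K,
    s(n) = 1[ sum_{f=1}^K w f * s(n-f) - th ] for n >= K.
    [tr_list ... n] is the list [s(0); ...; s(n-1)]. *)
Fixpoint tr_list (K : nat) (init : nat -> nat) (w : nat -> R) (th : R) (n : nat)
  : list nat :=
  match n with
  | O => []
  | S n' =>
      let l := tr_list K init w th n' in
      l ++ [if (n' <? K)%nat then init n'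
            else ind (sum1 K (fun f => w f * INR (nth (n' - f) l 0%nat)) - th)]
  end.

Definition tr (K : nat) (init : nat -> nat) (w : nat -> R) (th : R) (n : nat) : nat :=
  nth n (tr_list K init w th (S n)) 0%nat.

(** Primes p with 2m < p < 3m, listed in decreasing order p_0 > p_1 > ... *)
Definition primeb (p : nat) : bool :=
  if prime_dec (Z.of_nat p) then true else false.

Definition prime_list (m : nat) : list nat :=
  filter primeb (rev (seq (2 * m + 1) (m - 1))).

Definition rho (m : nat) : nat := length (prime_list m).

Definition pr (m i : nat) : nat := nth i (prime_list m) 0%nat.

Definition kk (m : nat) : nat := ((6 * m - 1) * rho m)%nat.
Definition mu (m i : nat) : nat := (kk m / pr m i)%nat.
Definition beta_ (m i : nat) : nat := (kk m - pr m i * mu m i)%nat.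

(** If j = l * p_i for some i < rho(m) and 1 <= l <= 2 rho(m), returns Some l
    (the first such i is used; the sets {l p_i} are pairwise disjoint). *)
Definition ell_of (m j : nat) : option nat :=
  let R := rho m in
  match find (fun i => ((j mod pr m i =? 0) && (1 <=? j / pr m i)
                        && (j / pr m i <=? 2 * R))%nat) (seq 0 R) with
  | Some i => Some (j / pr m i)%nat
  | None => None
  end.

Definition abar (m j : nat) : R :=
  let R := rho m in
  match ell_of m j with
  | None => 0
  | Some l =>
      if Nat.even R then
        (if (l <=? 3 * R / 2)%nat then 2 else -2)
      else
        (if (l <=? (3 * R - 1) / 2)%nat then 2
         else if (l <=? 2 * R - 2)%nat then -2
         else -1)
  end.

Definition thetabar (m : nat) : R := INR (2 * rho m).

Definition x_init (m i t : nat) : nat :=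
  if existsb (fun l => (t =? beta_ m i + l * pr m i)%nat) (seq 0 (mu m i))
  then 1%nat else 0%nat.

Definition xa (m i t : nat) : nat :=
  tr (kk m) (x_init m i) (abar m) (thetabar m) t.

Definition hh (m : nat) : nat := (rho m * kk m)%nat.

Definition bw (m f : nat) : R :=
  if ((f mod rho m =? 0) && (1 <=? f / rho m) && (f / rho m <=? kk m))%nat
  then abar m (f / rho m) else 0.

Definition y_init (m n : nat) : nat := xa m (n mod rho m) (1 + n / rho m).

Definition y (m n : nat) : nat := tr (hh m) (y_init m) (bw m) (thetabar m) n.

Definition L1 (m d : nat) : nat :=
  (rho m * fold_left Nat.lcm (map (pr m) (seq 0 (S d))) 1)%nat.

Definition inB0 (m d f : nat) : bool :=
  ((1 <=? f) && (f <=? hh m - d)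
   && (y m (hh m + L1 m d - rho m - f) =? 1))%nat.

Definition inA (m d f : nat) : bool :=
  existsb (fun l => ((l <? f) && inB0 m d (f - l))%nat) (seq 0 (S d)).

Definition Tot (m d : nat) : nat :=
  length (filter (inB0 m d) (seq 1 (hh m - d))).

Definition betad (lam : R) (m d : nat) : R := lam / INR (Tot m d).
Definition xi (lam : R) (m d : nat) : R := lam - betad lam m d / 8.
Definition theta2 (lam : R) (m d : nat) : R := thetabar m + xi lam m d.

Definition cw (lam : R) (m d f : nat) : R :=
  if inA m d f then bw m f + betad lam m d else bw m f.

Definition z (lam : R) (m n d : nat) : nat :=
  tr (hh m) (y m) (cw lam m d) (theta2 lam m d) n.

(** Write p_i for the primes in (2m, 3m), rho = rho(m), k = kk m.
    1. Each x^{alpha_i} is the indicator of the residue class k mod p_i: the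
       weights \bar a sum to \bar theta on the multiples l p_i (l <= 2 rho) of
       the "own" prime and, since 2 rho <= m < p_i, every other prime p_i'
       contributes at most one hit of weight <= 2.  Interleaving, y(n) = 1
       iff 1 + n/rho = k (mod p_{n mod rho}); so on each residue class r mod
       rho the support of y is one residue class mod rho * p_r.
    2. Counting in windows: for h <= t < T0 := h + L_1(d) - rho, the number N
       of f in A(d) with y(t - f) = 1 is at most Tot(d) - 1.  On every class
       r the A(d)-hits exceed the B_0(d)-elements by at most one, and on a
       well-chosen class r0 <= d (a prime p_r0 not dividing the relevant
       quotient, which exists as that quotient is below lcm(p_0..p_d)) the
       A(d)-hits are at most d + 1, far fewer than the B_0(d)-elements.
    3. The perturbation of z adds beta(d) * N to the integer potential of y
       and shifts the threshold by xi(d); as N < Tot(d) and -1 <= lambda < 0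
       this never changes the sign, so z = y by strong induction on t. *)

From Stdlib Require Import Reals Lra Lia ZArith Arith Bool List Znumtheory Classical.
Import ListNotations.

Section Sums.
Local Open Scope R_scope.

Definition sumL (l : list nat) (g : nat -> R) : R := fold_right Rplus 0 (map g l).

Lemma sum1_sumL K g : sum1 K g = sumL (seq 1 K) g.
Proof. reflexivity. Qed.

Lemma sumL_ext_in l g1 g2 :
  (forall x, In x l -> g1 x = g2 x) -> sumL l g1 = sumL l g2.
Proof.
  unfold sumL; induction l as [|a l IH]; simpl; intros H; auto.
  rewrite H, IH; auto.
Qed.

Lemma sumL_app l1 l2 g : sumL (l1 ++ l2) g = sumL l1 g + sumL l2 g.
Proof. unfold sumL; induction l1; simpl; [lra|]. rewrite IHl1; lra. Qed.

Lemma sumL_plus l g1 g2 : sumL l (fun x => g1 x + g2 x) = sumL l g1 + sumL l g2.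
Proof. unfold sumL; induction l; simpl; [lra|]. rewrite IHl; lra. Qed.

Lemma sumL_scal_l l g c : sumL l (fun x => c * g x) = c * sumL l g.
Proof. unfold sumL; induction l; simpl; [lra|]. rewrite IHl; lra. Qed.

Lemma sumL_scal_r l g c : sumL l (fun x => g x * c) = sumL l g * c.
Proof.
  rewrite (sumL_ext_in l _ (fun x => c * g x)), sumL_scal_l by (intros; lra). lra.
Qed.

Lemma sumL_const l c : sumL l (fun _ => c) = INR (length l) * c.
Proof.
  unfold sumL; induction l; simpl fold_right; simpl length; [simpl; lra|].
  rewrite IHl, S_INR; lra.
Qed.

Lemma sumL_zero_terms l g : (forall x, In x l -> g x = 0) -> sumL l g = 0.
Proof. intros H. rewrite (sumL_ext_in l g (fun _ => 0)), sumL_const by auto. lra. Qed.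

Lemma sumL_seq_split a x y g : sumL (seq a (x + y)) g = sumL (seq a x) g + sumL (seq (a + x) y) g.
Proof. rewrite seq_app, sumL_app. reflexivity. Qed.

Lemma sumL_seq_const a n g c :
  (forall x, (a <= x < a + n)%nat -> g x = c) -> sumL (seq a n) g = INR n * c.
Proof.
  intros H. rewrite (sumL_ext_in _ _ (fun _ => c)), sumL_const, length_seq; auto.
  intros x Hx; apply in_seq in Hx; apply H; lia.
Qed.

Lemma sumL_le l g1 g2 :
  (forall x, In x l -> g1 x <= g2 x) -> sumL l g1 <= sumL l g2.
Proof.
  unfold sumL; induction l as [|a l IH]; simpl; intros H; [lra|].
  specialize (IH (fun x Hx => H x (or_intror Hx))). specialize (H a (or_introl eq_refl)). lra.
Qed.

Lemma sumL_swap l1 l2 (F : nat -> nat -> R) :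
  sumL l1 (fun a => sumL l2 (fun b => F a b)) = sumL l2 (fun b => sumL l1 (fun a => F a b)).
Proof.
  induction l1 as [|a l1 IH].
  - rewrite (sumL_zero_terms l2) by reflexivity. reflexivity.
  - change (sumL (a :: l1) (fun a0 => sumL l2 (fun b => F a0 b)))
      with (sumL l2 (fun b => F a b) + sumL l1 (fun a0 => sumL l2 (fun b => F a0 b))).
    rewrite IH, <- sumL_plus. reflexivity.
Qed.

Lemma sumL_seq_delta lo n a (c : nat -> R) : (lo <= a < lo + n)%nat ->
  sumL (seq lo n) (fun x => if (x =? a)%nat then c x else 0) = c a.
Proof.
  revert lo; induction n as [|n IH]; intros lo Ha; [lia|].
  change (sumL (seq lo (S n)) ?g) with (g lo + sumL (seq (S lo) n) g).
  destruct (Nat.eqb_spec lo a) as [<-|Hne].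
  - rewrite Nat.eqb_refl, sumL_zero_terms; [lra|].
    intros x Hx; apply in_seq in Hx. destruct (Nat.eqb_spec x lo); [lia|auto].
  - rewrite (proj2 (Nat.eqb_neq _ _) Hne), IH by lia. lra.
Qed.

End Sums.

Section Counting.
Local Open Scope nat_scope.

Definition cnt (P : nat -> bool) (l : list nat) : nat := length (filter P l).

Definition natsum (l : list nat) (g : nat -> nat) : nat := fold_right plus 0 (map g l).

Lemma cnt_cons P a l : cnt P (a :: l) = (if P a then 1 else 0) + cnt P l.
Proof. unfold cnt; simpl. destruct (P a); reflexivity. Qed.

Lemma cnt_app P l1 l2 : cnt P (l1 ++ l2) = cnt P l1 + cnt P l2.
Proof. unfold cnt; rewrite filter_app, length_app; auto. Qed.

Lemma cnt_ext_in P Q l : (forall x, In x l -> P x = Q x) -> cnt P l = cnt Q l.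
Proof.
  induction l as [|a l IH]; intros H; auto.
  rewrite !cnt_cons, (H a (or_introl eq_refl)), IH; auto.
  intros x Hx; apply H; right; auto.
Qed.

Lemma cnt_le P Q l :
  (forall x, In x l -> P x = true -> Q x = true) -> cnt P l <= cnt Q l.
Proof.
  induction l as [|a l IH]; intros H; [auto|]. rewrite !cnt_cons.
  specialize (IH (fun x Hx => H x (or_intror Hx))).
  destruct (P a) eqn:Pa; [rewrite (H a (or_introl eq_refl) Pa)|destruct (Q a)]; lia.
Qed.

Lemma cnt_le1 P l : NoDup l ->
  (forall a b, In a l -> In b l -> P a = true -> P b = true -> a = b) -> cnt P l <= 1.
Proof.
  induction l as [|b l IH]; intros Hnd Hu; [unfold cnt; simpl; lia|].
  inversion Hnd as [|? ? Hb Hnd']; subst. rewrite cnt_cons. destruct (P b) eqn:Pb.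
  - enough (cnt P l = 0) by lia.
    rewrite (cnt_ext_in P (fun _ => false)); [unfold cnt; rewrite filter_false; auto|].
    intros x Hx. destruct (P x) eqn:Px; auto.
    exfalso. apply Hb. rewrite <- (Hu x b); simpl; auto.
  - apply IH; auto. intros; apply Hu; simpl; auto.
Qed.

Lemma sumL_cnt l (P : nat -> bool) : sumL l (fun x => if P x then 1%R else 0%R) = INR (cnt P l).
Proof.
  induction l as [|a l IH]; [reflexivity|]. rewrite cnt_cons, plus_INR, <- IH.
  unfold sumL; simpl. destruct (P a); simpl; lra.
Qed.

Lemma natsum_ext_in l g1 g2 : (forall x, In x l -> g1 x = g2 x) -> natsum l g1 = natsum l g2.
Proof. unfold natsum; induction l; simpl; intros H; auto; rewrite H by auto; f_equal; auto. Qed.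

Lemma natsum_plus l g1 g2 : natsum l (fun x => g1 x + g2 x) = natsum l g1 + natsum l g2.
Proof. unfold natsum; induction l; simpl; auto. rewrite IHl; lia. Qed.

Lemma natsum_const l c : natsum l (fun _ => c) = length l * c.
Proof. unfold natsum; induction l; simpl; auto; rewrite IHl; lia. Qed.

Lemma natsum_le l g1 g2 : (forall x, In x l -> g1 x <= g2 x) -> natsum l g1 <= natsum l g2.
Proof.
  unfold natsum; induction l as [|a l IH]; simpl; intros H; auto.
  specialize (IH (fun x Hx => H x (or_intror Hx))). specialize (H a (or_introl eq_refl)). lia.
Qed.

Lemma natsum_le_gain l a b r0 delta : NoDup l -> In r0 l ->
  (forall r, In r l -> a r <= b r) -> a r0 + delta <= b r0 ->
  natsum l a + delta <= natsum l b.
Proof.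
  induction l as [|x l IH]; intros Hnd Hin Hab Hr0; [destruct Hin|].
  inversion Hnd; subst. unfold natsum in *; simpl.
  destruct Hin as [->|Hin].
  - pose proof (natsum_le l a b (fun r Hr => Hab r (or_intror Hr))). unfold natsum in *. lia.
  - specialize (IH H2 Hin (fun r Hr => Hab r (or_intror Hr)) Hr0).
    specialize (Hab x (or_introl eq_refl)). lia.
Qed.

Lemma natsum_seq_delta lo n a c : lo <= a < lo + n ->
  natsum (seq lo n) (fun r => if r =? a then c else 0) = c.
Proof.
  revert lo; induction n as [|n IH]; intros lo Ha; [lia|].
  change (natsum (seq lo (S n)) ?g) with (g lo + natsum (seq (S lo) n) g).
  destruct (Nat.eqb_spec lo a) as [<-|Hne].
  - rewrite Nat.eqb_refl, (natsum_ext_in _ _ (fun _ => 0)), natsum_const; [lia|].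
    intros x Hx; apply in_seq in Hx. destruct (Nat.eqb_spec x lo); [lia|auto].
  - rewrite (proj2 (Nat.eqb_neq _ _) Hne), IH by lia. lia.
Qed.

Lemma cnt_classes P (cls : nat -> nat) R l : (forall x, In x l -> cls x < R) ->
  cnt P l = natsum (seq 0 R) (fun r => cnt (fun x => P x && (cls x =? r)) l).
Proof.
  induction l as [|a l IH]; intros H.
  - unfold cnt; simpl. rewrite natsum_const. lia.
  - rewrite cnt_cons, IH by (intros; apply H; simpl; auto).
    assert (Ha : 0 <= cls a < 0 + R) by (specialize (H a (or_introl eq_refl)); lia).
    rewrite <- (natsum_seq_delta 0 R (cls a) (if P a then 1 else 0) Ha), <- natsum_plus.
    apply natsum_ext_in. intros r _. rewrite cnt_cons, (Nat.eqb_sym r (cls a)).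
    destruct (P a), (cls a =? r); reflexivity.
Qed.

Lemma cnt_existsb (Q : nat -> nat -> bool) (Rp : nat -> bool) Ls l :
  cnt (fun x => existsb (fun j => Q j x) Ls && Rp x) l
  <= natsum Ls (fun j => cnt (fun x => Q j x && Rp x) l).
Proof.
  induction l as [|a l IH].
  - unfold cnt; simpl. rewrite natsum_const; lia.
  - rewrite cnt_cons.
    rewrite (natsum_ext_in _ _ (fun j => (if Q j a && Rp a then 1 else 0)
                                        + cnt (fun x => Q j x && Rp x) l))
      by (intros; apply cnt_cons).
    rewrite natsum_plus. apply Nat.add_le_mono; auto.
    destruct (existsb (fun j => Q j a) Ls && Rp a) eqn:E; [|lia].
    apply andb_true_iff in E as [E1 E2]. apply existsb_exists in E1 as [j [Hj Qj]].
    clear - Hj Qj E2. induction Ls as [|b Ls IHL]; [destruct Hj|]. unfold natsum in *; simpl.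
    destruct Hj as [->|Hj]; [rewrite Qj, E2; simpl; lia|]. specialize (IHL Hj). lia.
Qed.

Lemma natsum_le_length l g : (forall x, In x l -> g x <= 1) -> natsum l g <= length l.
Proof. intros H. rewrite <- (Nat.mul_1_r (length l)), <- natsum_const. apply natsum_le; auto. Qed.

Lemma cnt_rev_window P t len : len <= t ->
  cnt (fun f => P (t - f)) (seq 1 len) = cnt P (seq (t - len) len).
Proof.
  induction len as [|len IH]; intros H; auto.
  rewrite seq_S, cnt_app, IH by lia.
  replace (seq (t - S len) (S len)) with ((t - S len) :: seq (t - len) len)
    by (simpl; f_equal; f_equal; lia).
  rewrite !cnt_cons. replace (t - (1 + len)) with (t - S len) by lia.
  unfold cnt at 2; simpl. lia.
Qed.

Lemma cnt_shift P c len : forall a,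
  cnt (fun n => P (n + c)) (seq a len) = cnt P (seq (a + c) len).
Proof.
  induction len as [|len IH]; intros a; [reflexivity|].
  change (seq a (S len)) with (a :: seq (S a) len).
  change (seq (a + c) (S len)) with ((a + c) :: seq (S (a + c)) len).
  rewrite !cnt_cons, IH. reflexivity.
Qed.

Lemma cnt_prefix P a len len' : len <= len' -> cnt P (seq a len) <= cnt P (seq a len').
Proof. intros H. replace len' with (len + (len' - len)) by lia. rewrite seq_app, cnt_app. lia. Qed.

Lemma cnt_residue_block P e a : 0 < P -> e < P -> cnt (fun n => n mod P =? e) (seq a P) = 1.
Proof.
  intros HP He. induction a as [|a IH].
  - rewrite (cnt_ext_in _ (fun n => n =? e)).
    + apply Nat.le_antisymm.
      * apply cnt_le1; [apply seq_NoDup|]. intros x y _ _ Hx Hy.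
        apply Nat.eqb_eq in Hx, Hy; congruence.
      * assert (He' : In e (filter (fun n => n =? e) (seq 0 P)))
          by (apply filter_In; split; [apply in_seq; lia | apply Nat.eqb_refl]).
        unfold cnt; destruct (filter _ _); [destruct He'|simpl; lia].
    + intros x Hx. apply in_seq in Hx. rewrite Nat.mod_small; auto. lia.
  - assert (E1 : seq a P = a :: seq (S a) (P - 1))
      by (destruct P; [lia|simpl; rewrite Nat.sub_0_r; auto]).
    assert (E2 : seq (S a) P = seq (S a) (P - 1) ++ [a + 1 * P])
      by (destruct P; [lia|]; rewrite seq_S; f_equal; f_equal; lia).
    rewrite E1, cnt_cons in IH. rewrite E2, cnt_app. unfold cnt at 2. cbn [filter].
    rewrite Nat.Div0.mod_add.
    destruct (a mod P =? e); simpl in *; lia.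
Qed.

Lemma cnt_residue_mult P e a q : 0 < P -> e < P ->
  cnt (fun n => n mod P =? e) (seq a (q * P)) = q.
Proof.
  intros HP He. revert a. induction q; intros a; simpl; auto.
  rewrite seq_app, cnt_app, cnt_residue_block, IHq; auto.
Qed.

Lemma cnt_residue_upper P e a len q : 0 < P -> e < P -> len <= q * P ->
  cnt (fun n => n mod P =? e) (seq a len) <= q.
Proof.
  intros. rewrite <- (cnt_residue_mult P e a q) by auto. apply cnt_prefix; auto.
Qed.

Lemma cnt_residue_lower P e a len q : 0 < P -> e < P -> q * P <= len ->
  q <= cnt (fun n => n mod P =? e) (seq a len).
Proof.
  intros. rewrite <- (cnt_residue_mult P e a q) at 1 by auto. apply cnt_prefix; auto.
Qed.

End Counting.

Section Recurrence.
Variables (K : nat) (init : nat -> nat) (w : nat -> R) (th : R).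

Lemma tr_list_length n : length (tr_list K init w th n) = n.
Proof. induction n; simpl; auto. rewrite length_app, IHn; simpl; lia. Qed.

Lemma tr_list_nth n i : (i < n)%nat -> nth i (tr_list K init w th n) 0%nat = tr K init w th i.
Proof.
  induction n as [|n IH]; intros Hi; [lia|].
  destruct (Nat.eq_dec i n) as [->|Hne]; [reflexivity|].
  simpl. rewrite app_nth1 by (rewrite tr_list_length; lia). apply IH; lia.
Qed.

Lemma tr_last n : tr K init w th n =
  if (n <? K)%nat then init n
  else ind (sum1 K (fun f => w f * INR (nth (n - f) (tr_list K init w th n) 0%nat)) - th).
Proof.
  unfold tr. simpl. rewrite app_nth2 by (rewrite tr_list_length; lia).
  rewrite tr_list_length, Nat.sub_diag. reflexivity.
Qed.

Lemma tr_lt n : (n < K)%nat -> tr K init w th n = init n.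
Proof. intros H. rewrite tr_last, (proj2 (Nat.ltb_lt _ _) H). reflexivity. Qed.

Lemma tr_ge n : (K <= n)%nat ->
  tr K init w th n = ind (sum1 K (fun f => w f * INR (tr K init w th (n - f))) - th).
Proof.
  intros H. rewrite tr_last, (proj2 (Nat.ltb_ge _ _) H).
  f_equal. f_equal. rewrite !sum1_sumL. apply sumL_ext_in. intros f Hf. apply in_seq in Hf.
  rewrite tr_list_nth by lia. reflexivity.
Qed.

End Recurrence.

Section Primes.
Local Open Scope nat_scope.

Definition primeN (p : nat) : Prop := prime (Z.of_nat p).

Lemma primeN_ge2 p : primeN p -> 2 <= p.
Proof. unfold primeN; intros H. apply prime_ge_2 in H. lia. Qed.

Lemma primeN_mul p a b : primeN p -> Nat.divide p (a * b) -> Nat.divide p a \/ Nat.divide p b.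
Proof.
  intros Hp [c Hc]. assert (Hz : (Z.of_nat p | Z.of_nat a * Z.of_nat b)%Z).
  { exists (Z.of_nat c). rewrite <- Nat2Z.inj_mul, Hc. lia. }
  pose proof (primeN_ge2 p Hp).
  destruct (prime_mult _ Hp _ _ Hz) as [[e He]|[e He]]; [left|right];
    exists (Z.to_nat e); (assert (0 <= e)%Z by nia); nia.
Qed.

Lemma primeN_div_prime p q : primeN p -> primeN q -> Nat.divide p q -> p = q.
Proof.
  intros Hp Hq [c Hc]. assert (Hz : (Z.of_nat p | Z.of_nat q)%Z).
  { exists (Z.of_nat c). rewrite Hc. lia. }
  pose proof (prime_div_prime _ _ Hp Hq Hz). lia.
Qed.

Lemma in_prime_list m x :
  In x (prime_list m) -> primeN x /\ 2 * m + 1 <= x /\ x < 3 * m.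
Proof.
  unfold prime_list, primeb, primeN. intros H. apply filter_In in H as [H1 H2].
  apply in_rev, in_seq in H1. destruct (prime_dec (Z.of_nat x)); [split; [auto|lia]|discriminate].
Qed.

Lemma pr_facts m i : i < rho m -> primeN (pr m i) /\ 2 * m + 1 <= pr m i /\ pr m i < 3 * m.
Proof. intros H. apply in_prime_list, nth_In. auto. Qed.

Lemma pr_inj m i j : i < rho m -> j < rho m -> pr m i = pr m j -> i = j.
Proof.
  intros Hi Hj He. eapply NoDup_nth; eauto.
  apply NoDup_filter, NoDup_rev, seq_NoDup.
Qed.

Lemma pr_divide_mul_other m i j c : i < rho m -> j < rho m -> i <> j ->
  Nat.divide (pr m i) (c * pr m j) -> Nat.divide (pr m i) c.
Proof.
  intros Hi Hj Hij Hd. destruct (pr_facts m i Hi) as [Pi _]. destruct (pr_facts m j Hj) as [Pj _].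
  destruct (primeN_mul _ _ _ Pi Hd) as [Hc|Hc]; auto.
  exfalso. apply Hij, (pr_inj m); auto. apply primeN_div_prime; auto.
Qed.

Lemma cnt_odd_seq n a : cnt Nat.odd (seq a n) <= (n + 1) / 2.
Proof.
  revert a; induction n as [n IH] using (well_founded_induction lt_wf); intros a.
  destruct n as [|[|n]]; [unfold cnt; simpl; lia|unfold cnt; simpl; destruct (Nat.odd a); simpl; lia|].
  change (seq a (S (S n))) with (a :: S a :: seq (S (S a)) n). rewrite !cnt_cons.
  specialize (IH n ltac:(lia) (S (S a))).
  replace ((S (S n) + 1) / 2) with (S ((n + 1) / 2))
    by (replace (S (S n) + 1) with ((n + 1) + 1 * 2) by lia; rewrite Nat.div_add; lia).
  rewrite Nat.odd_succ, <- Nat.negb_odd. destruct (Nat.odd a); cbn [negb]; lia.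
Qed.

(** The primes in (2m, 3m) are odd, hence there are at most m/2 of them. *)
Lemma rho_bound m : 2 * rho m <= m.
Proof.
  unfold rho, prime_list. change (length (filter primeb ?l)) with (cnt primeb l).
  unfold cnt. rewrite filter_rev, length_rev. fold (cnt primeb (seq (2 * m + 1) (m - 1))).
  assert (cnt primeb (seq (2 * m + 1) (m - 1)) <= cnt Nat.odd (seq (2 * m + 1) (m - 1))).
  { apply cnt_le. intros x Hx Hp. apply in_seq in Hx.
    assert (Px : primeN x) by (unfold primeb in Hp; destruct (prime_dec _); [auto|discriminate]).
    destruct (Nat.odd x) eqn:E; auto. exfalso.
    assert (Hev : Nat.even x = true) by (rewrite <- Nat.negb_odd, E; auto).
    apply Nat.even_spec in Hev as [c Hc].
    assert (Hd : (Z.of_nat 2 | Z.of_nat x)%Z) by (exists (Z.of_nat c); lia).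
    pose proof (prime_divisors _ Px _ Hd). lia. }
  pose proof (cnt_odd_seq (m - 1) (2 * m + 1)).
  pose proof (Nat.Div0.mul_div_le (m - 1 + 1) 2). lia.
Qed.

Lemma pr_gt_2rho m i : i < rho m -> 2 * rho m < pr m i.
Proof. intros Hi. pose proof (rho_bound m). pose proof (pr_facts m i Hi). lia. Qed.

Lemma lp_le_k m i l : i < rho m -> l <= 2 * rho m -> l * pr m i <= kk m.
Proof. intros Hi Hl. destruct (pr_facts m i Hi) as [_ [H1 H2]]. unfold kk. nia. Qed.

End Primes.

(** ** The weights \bar a as a sum over the multiples of the primes *)

Section Deltas.
Local Open Scope R_scope.

Lemma sumL_find l (P : nat -> bool) (F : nat -> R) : NoDup l ->
  (forall a b, In a l -> In b l -> P a = true -> P b = true -> a = b) ->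
  sumL l (fun x => if P x then F x else 0) = match find P l with Some x => F x | None => 0 end.
Proof.
  induction l as [|b l IH]; intros Hnd Hu; [reflexivity|].
  inversion Hnd as [|? ? Hb Hnd']; subst. cbn [find].
  change (sumL (b :: l) ?g) with (g b + sumL l g). cbv beta. destruct (P b) eqn:Pb.
  - rewrite (sumL_zero_terms l); [lra|].
    intros x Hx. destruct (P x) eqn:Px; auto.
    exfalso. apply Hb. rewrite <- (Hu x b); simpl; auto.
  - rewrite IH; auto; [lra|]. intros; apply Hu; simpl; auto.
Qed.

Lemma sumL_multiples_delta j p n (g : nat -> R) : (0 < p)%nat ->
  sumL (seq 1 n) (fun l => if (j =? l * p)%nat then g l else 0) =
  if ((j mod p =? 0) && (1 <=? j / p) && (j / p <=? n))%nat then g (j / p)%nat else 0.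
Proof.
  intros Hp. pose proof (Nat.div_mod_eq j p) as Hj.
  assert (Hmul : forall l, j = (l * p)%nat -> (j mod p = 0 /\ l = j / p)%nat).
  { intros l ->. rewrite Nat.Div0.mod_mul, Nat.div_mul by lia. auto. }
  destruct (Nat.eqb_spec (j mod p) 0) as [H0|H0]; cbn [andb].
  - rewrite (sumL_ext_in _ _ (fun l => if (l =? j / p)%nat then g l else 0)).
    2:{ intros l _. destruct (Nat.eqb_spec j (l * p)) as [E|E], (Nat.eqb_spec l (j / p)) as [E'|E'];
        auto; [destruct (Hmul l E); lia|]. exfalso. apply E. subst l. lia. }
    destruct (Nat.leb_spec 1 (j / p)), (Nat.leb_spec (j / p) n); cbn [andb];
      [apply sumL_seq_delta; lia| | |];
      apply sumL_zero_terms; intros l Hl; apply in_seq in Hl;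
      destruct (Nat.eqb_spec l (j / p)); auto; lia.
  - apply sumL_zero_terms. intros l _.
    destruct (Nat.eqb_spec j (l * p)) as [E|]; auto. destruct (Hmul l E); lia.
Qed.

End Deltas.

Section Weights.
Variable m : nat.

Definition wt (l : nat) : R :=
  if Nat.even (rho m) then
    (if (l <=? 3 * rho m / 2)%nat then 2 else -2)
  else
    (if (l <=? (3 * rho m - 1) / 2)%nat then 2
     else if (l <=? 2 * rho m - 2)%nat then -2
     else -1).

Lemma wt_le2 l : wt l <= 2.
Proof. unfold wt. repeat (destruct (_ <=? _)%nat || destruct (Nat.even _)); lra. Qed.

(** The weights of one prime add up to the threshold \bar theta = 2 rho (this fails for rho = 1). *)
Lemma wt_sum : (2 <= rho m)%nat -> sumL (seq 1 (2 * rho m)) wt = INR (2 * rho m).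
Proof.
  intros Hr. unfold wt. destruct (Nat.even (rho m)) eqn:E.
  - apply Nat.even_spec in E as [u Hu]. rewrite Hu.
    replace (3 * (2 * u) / 2)%nat with (3 * u)%nat
      by (replace (3 * (2 * u))%nat with (3 * u * 2)%nat by lia; rewrite Nat.div_mul; lia).
    replace (2 * (2 * u))%nat with (3 * u + u)%nat by lia.
    rewrite sumL_seq_split, (sumL_seq_const 1 (3 * u) _ 2), (sumL_seq_const (1 + 3 * u) u _ (-2)).
    + rewrite !plus_INR, !mult_INR. simpl. lra.
    + intros x Hx. destruct (Nat.leb_spec x (3 * u)); auto; lia.
    + intros x Hx. destruct (Nat.leb_spec x (3 * u)); auto; lia.
  - assert (Ho : Nat.odd (rho m) = true) by (rewrite <- Nat.negb_even, E; auto).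
    apply Nat.odd_spec in Ho as [u Hu]. rewrite Hu.
    replace ((3 * (2 * u + 1) - 1) / 2)%nat with (3 * u + 1)%nat
      by (replace (3 * (2 * u + 1) - 1)%nat with ((3 * u + 1) * 2)%nat by lia; rewrite Nat.div_mul; lia).
    replace (2 * (2 * u + 1))%nat with ((3 * u + 1) + ((u - 1) + 2))%nat by lia.
    rewrite (sumL_seq_split 1 (3 * u + 1) (u - 1 + 2)), (sumL_seq_split (1 + (3 * u + 1)) (u - 1) 2).
    rewrite (sumL_seq_const 1 (3 * u + 1) _ 2), (sumL_seq_const (1 + (3 * u + 1)) (u - 1) _ (-2)),
      (sumL_seq_const (1 + (3 * u + 1) + (u - 1)) 2 _ (-1)).
    + rewrite !plus_INR, !mult_INR, minus_INR by lia. simpl. lra.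
    + intros x Hx. destruct (Nat.leb_spec x (3 * u + 1)); [lia|].
      destruct (Nat.leb_spec x (3 * u + 1 + (u - 1 + 2) - 2)); auto; lia.
    + intros x Hx. destruct (Nat.leb_spec x (3 * u + 1)); [lia|].
      destruct (Nat.leb_spec x (3 * u + 1 + (u - 1 + 2) - 2)); auto; lia.
    + intros x Hx. destruct (Nat.leb_spec x (3 * u + 1)); auto; lia.
Qed.

Lemma abar_decomp j : abar m j =
  sumL (seq 0 (rho m)) (fun i =>
    sumL (seq 1 (2 * rho m)) (fun l => if (j =? l * pr m i)%nat then wt l else 0)).
Proof.
  set (P := fun i => ((j mod pr m i =? 0) && (1 <=? j / pr m i) && (j / pr m i <=? 2 * rho m))%nat).
  transitivity (sumL (seq 0 (rho m)) (fun i => if P i then wt (j / pr m i)%nat else 0)).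
  - rewrite sumL_find; [|apply seq_NoDup|].
    + unfold abar, ell_of, wt. fold P. destruct (find P (seq 0 (rho m))); reflexivity.
    + intros a b Ha Hb Pa Pb. apply in_seq in Ha, Hb. unfold P in Pa, Pb.
      rewrite !andb_true_iff, Nat.eqb_eq, !Nat.leb_le in Pa, Pb.
      pose proof (pr_gt_2rho m a ltac:(lia)). pose proof (pr_gt_2rho m b ltac:(lia)).
      destruct (Nat.eq_dec a b) as [|Hab]; auto. exfalso.
      assert (Hd : Nat.divide (pr m a) ((j / pr m b) * pr m b)).
      { exists (j / pr m a)%nat. pose proof (Nat.div_mod_eq j (pr m a)).
        pose proof (Nat.div_mod_eq j (pr m b)). lia. }
      apply pr_divide_mul_other in Hd; try lia. apply Nat.divide_pos_le in Hd; lia.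
  - apply sumL_ext_in. intros i Hi. apply in_seq in Hi.
    rewrite sumL_multiples_delta; [reflexivity|]. pose proof (pr_gt_2rho m i ltac:(lia)). lia.
Qed.

Lemma abar_convolution (X : nat -> R) :
  sum1 (kk m) (fun j => abar m j * X j) =
  sumL (seq 0 (rho m)) (fun i => sumL (seq 1 (2 * rho m)) (fun l => wt l * X (l * pr m i)%nat)).
Proof.
  rewrite sum1_sumL.
  rewrite (sumL_ext_in _ _ (fun j => sumL (seq 0 (rho m)) (fun i => sumL (seq 1 (2 * rho m))
             (fun l => if (j =? l * pr m i)%nat then wt l * X j else 0)))).
  2:{ intros j _. rewrite abar_decomp, <- sumL_scal_r. apply sumL_ext_in. intros i _.
      rewrite <- sumL_scal_r. apply sumL_ext_in. intros l _. destruct (_ =? _)%nat; lra. }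
  rewrite sumL_swap. apply sumL_ext_in. intros i Hi. apply in_seq in Hi.
  rewrite sumL_swap. apply sumL_ext_in. intros l Hl. apply in_seq in Hl.
  pose proof (lp_le_k m i l ltac:(lia) ltac:(lia)). pose proof (pr_gt_2rho m i ltac:(lia)).
  apply sumL_seq_delta. nia.
Qed.

End Weights.

(** ** Residue-class indicators are fixed points of the x-recurrence *)

Definition resid_ind (p e n : nat) : nat := if (n mod p =? e)%nat then 1%nat else 0%nat.

Lemma INR_resid_ind p e n : INR (resid_ind p e n) = if (n mod p =? e)%nat then 1%R else 0%R.
Proof. unfold resid_ind. destruct (_ =? _)%nat; reflexivity. Qed.

Lemma mod_sub_mul t a p : (a * p <= t)%nat -> ((t - a * p) mod p = t mod p)%nat.
Proof. intros H. rewrite <- (Nat.Div0.mod_add (t - a * p) a p). f_equal. lia. Qed.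

Lemma mod_eq_divide x y p : (0 < p)%nat -> (x mod p = y mod p)%nat -> (x <= y)%nat ->
  Nat.divide p (y - x).
Proof.
  intros Hp H Hxy. exists (y / p - x / p)%nat.
  pose proof (Nat.div_mod_eq x p). pose proof (Nat.div_mod_eq y p).
  pose proof (Nat.Div0.div_le_mono x y p Hxy). rewrite Nat.mul_sub_distr_r. lia.
Qed.

Section ClassStep.
Local Open Scope R_scope.
Variable m : nat.
Hypothesis Hr : (2 <= rho m)%nat.
Variables (i e t : nat).
Hypothesis Hi : (i < rho m)%nat.
Hypothesis Ht : (kk m <= t)%nat.

(** The block of the multiples of the own prime p_i: all of them, or none, hit the class. *)
Lemma own_prime_block :
  sumL (seq 1 (2 * rho m)) (fun l => wt m l * INR (resid_ind (pr m i) e (t - l * pr m i)))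
  = if (t mod pr m i =? e)%nat then INR (2 * rho m) else 0.
Proof.
  rewrite (sumL_ext_in _ _ (fun l => wt m l * (if (t mod pr m i =? e)%nat then 1 else 0))).
  - rewrite sumL_scal_r, wt_sum by auto. destruct (_ =? _)%nat; lra.
  - intros l Hl. apply in_seq in Hl. rewrite INR_resid_ind, mod_sub_mul; [reflexivity|].
    pose proof (lp_le_k m i l Hi ltac:(lia)). lia.
Qed.

Section OtherPrime.
Variable i' : nat.
Hypothesis Hi' : (i' < rho m)%nat.
Hypothesis Hii' : i <> i'.

Lemma other_prime_hits_le1 :
  (cnt (fun l => ((t - l * pr m i') mod pr m i =? e)%nat) (seq 1 (2 * rho m)) <= 1)%nat.
Proof.
  apply cnt_le1; [apply seq_NoDup|].
  assert (Hord : forall a b, (1 <= a <= b)%nat -> (b <= 2 * rho m)%nat ->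
            ((t - a * pr m i') mod pr m i = e)%nat -> ((t - b * pr m i') mod pr m i = e)%nat -> a = b).
  { intros a b Hab Hb Ha' Hb'.
    pose proof (lp_le_k m i' b Hi' Hb). pose proof (pr_gt_2rho m i Hi).
    assert (Hd : Nat.divide (pr m i) ((t - a * pr m i') - (t - b * pr m i'))).
    { apply mod_eq_divide; [lia|congruence|nia]. }
    replace ((t - a * pr m i') - (t - b * pr m i'))%nat with ((b - a) * pr m i')%nat in Hd
      by (rewrite Nat.mul_sub_distr_r; nia).
    apply pr_divide_mul_other in Hd; auto.
    destruct (Nat.eq_dec a b); auto. apply Nat.divide_pos_le in Hd; lia. }
  intros a b Ha Hb Pa Pb. apply in_seq in Ha, Hb. apply Nat.eqb_eq in Pa, Pb.
  destruct (Nat.le_ge_cases a b); [|symmetry]; apply Hord; auto; lia.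
Qed.

Lemma other_prime_block_le2 :
  sumL (seq 1 (2 * rho m)) (fun l => wt m l * INR (resid_ind (pr m i) e (t - l * pr m i'))) <= 2.
Proof.
  apply Rle_trans with
    (sumL (seq 1 (2 * rho m)) (fun l => 2 * (if ((t - l * pr m i') mod pr m i =? e)%nat then 1 else 0))).
  - apply sumL_le. intros l _. rewrite INR_resid_ind. pose proof (wt_le2 m l).
    destruct (_ =? _)%nat; lra.
  - rewrite sumL_scal_l, sumL_cnt. pose proof (le_INR _ _ other_prime_hits_le1) as Hc.
    change (INR 1) with 1 in Hc. lra.
Qed.

(** If t itself lies in the class, no multiple of another prime does: p_i does not divide l p_i'. *)
Lemma other_prime_block_zero : (t mod pr m i = e)%nat ->
  sumL (seq 1 (2 * rho m)) (fun l => wt m l * INR (resid_ind (pr m i) e (t - l * pr m i'))) = 0.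
Proof.
  intros Hte. apply sumL_zero_terms. intros l Hl. apply in_seq in Hl.
  rewrite INR_resid_ind. destruct (Nat.eqb_spec ((t - l * pr m i') mod pr m i) e) as [E|]; [|lra].
  exfalso. pose proof (lp_le_k m i' l Hi' ltac:(lia)). pose proof (pr_gt_2rho m i Hi).
  assert (Hd : Nat.divide (pr m i) (t - (t - l * pr m i'))) by (apply mod_eq_divide; lia).
  replace (t - (t - l * pr m i'))%nat with (l * pr m i')%nat in Hd by lia.
  apply pr_divide_mul_other, Nat.divide_pos_le in Hd; auto; lia.
Qed.

End OtherPrime.

Lemma class_step :
  ind (sum1 (kk m) (fun j => abar m j * INR (resid_ind (pr m i) e (t - j))) - thetabar m)
  = resid_ind (pr m i) e t.
Proof.
  rewrite abar_convolution. unfold ind, thetabar.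
  change (resid_ind (pr m i) e t) with (if (t mod pr m i =? e)%nat then 1%nat else 0%nat).
  assert (Hsplit : forall (c0 c1 : R), sumL (seq 0 (rho m)) (fun i' => if (i' =? i)%nat then c0 else c1)
                                     = c0 + (INR (rho m) - 1) * c1).
  { intros c0 c1. rewrite (sumL_ext_in _ _ (fun i' => c1 + (if (i' =? i)%nat then c0 - c1 else 0)))
      by (intros x _; destruct (x =? i)%nat; lra).
    rewrite sumL_plus, sumL_const, length_seq, sumL_seq_delta by lia. lra. }
  destruct (Nat.eqb_spec (t mod pr m i) e) as [E|E].
  - rewrite (sumL_ext_in _ _ (fun i' => if (i' =? i)%nat then INR (2 * rho m) else 0)), Hsplit.
    + destruct (Rle_dec 0 _); [reflexivity|lra].
    + intros i' Hi'. apply in_seq in Hi'. destruct (Nat.eqb_spec i' i) as [->|Hne].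
      * rewrite own_prime_block. apply Nat.eqb_eq in E. rewrite E. reflexivity.
      * apply other_prime_block_zero; auto; lia.
  - assert (Hle : sumL (seq 0 (rho m)) (fun i' => sumL (seq 1 (2 * rho m))
                    (fun l => wt m l * INR (resid_ind (pr m i) e (t - l * pr m i'))))
                  <= sumL (seq 0 (rho m)) (fun i' => if (i' =? i)%nat then 0 else 2)).
    { apply sumL_le. intros i' Hi'. apply in_seq in Hi'. destruct (Nat.eqb_spec i' i) as [->|Hne].
      - rewrite own_prime_block. apply Nat.eqb_neq in E. rewrite E. lra.
      - apply other_prime_block_le2; auto; lia. }
    rewrite Hsplit, mult_INR in *. simpl INR in *.
    destruct (Rle_dec 0 _); [|reflexivity]. lra.
Qed.

End ClassStep.

Lemma sumL_reindex_multiples (r K K0 : nat) (F : nat -> R) : (0 < r)%nat -> (K <= K0)%nat ->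
  sumL (seq 1 (r * K))
       (fun f => if ((f mod r =? 0) && (1 <=? f / r) && (f / r <=? K0))%nat then F f else 0%R)
  = sumL (seq 1 K) (fun j => F (r * j)%nat).
Proof.
  intros Hr. induction K as [|K IH]; intros HK; [rewrite Nat.mul_0_r; reflexivity|].
  replace (r * S K)%nat with (r * K + ((r - 1) + 1))%nat by lia.
  rewrite !sumL_seq_split, IH by lia.
  replace (S K) with (K + 1)%nat by lia. rewrite sumL_seq_split. f_equal.
  rewrite (sumL_zero_terms (seq (1 + r * K) (r - 1))).
  - unfold sumL. cbn [map fold_right seq].
    replace (1 + r * K + (r - 1))%nat with (S K * r)%nat by lia.
    rewrite Nat.Div0.mod_mul, Nat.div_mul, (Nat.mul_comm (S K) r) by lia.
    replace (S K <=? K0)%nat with true by (symmetry; apply Nat.leb_le; lia).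
    replace (1 + K)%nat with (S K) by lia. simpl. lra.
  - intros f Hf. apply in_seq in Hf.
    replace (f mod r)%nat with (f - r * K)%nat.
    + replace (f - r * K =? 0)%nat with false by (symmetry; apply Nat.eqb_neq; lia). reflexivity.
    + replace f with ((f - r * K) + K * r)%nat at 2 by lia.
      rewrite Nat.Div0.mod_add, Nat.mod_small; lia.
Qed.

Definition y_closed (m n : nat) : nat :=
  resid_ind (pr m (n mod rho m)) (kk m mod pr m (n mod rho m)) (1 + n / rho m).

Section ClosedForms.
Variable m : nat.
Hypothesis Hr : (2 <= rho m)%nat.

Lemma x_init_formula i t : (i < rho m)%nat -> (t < kk m)%nat ->
  x_init m i t = resid_ind (pr m i) (kk m mod pr m i) t.
Proof.
  intros Hi Ht. pose proof (pr_gt_2rho m i Hi) as Hp.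
  assert (Hbeta : beta_ m i = (kk m mod pr m i)%nat)
    by (unfold beta_, mu; rewrite Nat.Div0.mod_eq; lia).
  unfold x_init, resid_ind, mu. rewrite Hbeta.
  pose proof (Nat.div_mod_eq (kk m) (pr m i)). pose proof (Nat.mod_upper_bound (kk m) (pr m i) ltac:(lia)).
  pose proof (Nat.div_mod_eq t (pr m i)). pose proof (Nat.mod_upper_bound t (pr m i) ltac:(lia)).
  destruct (existsb _ _) eqn:E.
  - apply existsb_exists in E as [l [_ Hl]]. apply Nat.eqb_eq in Hl.
    rewrite Hl, Nat.Div0.mod_add, Nat.Div0.mod_mod, Nat.eqb_refl. reflexivity.
  - destruct (Nat.eqb_spec (t mod pr m i) (kk m mod pr m i)) as [Heq|]; auto. exfalso.
    assert (Hex : existsb (fun l => (t =? kk m mod pr m i + l * pr m i)%nat)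
                    (seq 0 (kk m / pr m i)) = true).
    { apply existsb_exists. exists (t / pr m i)%nat. split.
      - apply in_seq. nia.
      - apply Nat.eqb_eq. lia. }
    congruence.
Qed.

Lemma xa_formula i t : (i < rho m)%nat -> xa m i t = resid_ind (pr m i) (kk m mod pr m i) t.
Proof.
  intros Hi. induction t as [t IH] using (well_founded_induction lt_wf).
  unfold xa. destruct (Nat.lt_ge_cases t (kk m)) as [Ht|Ht].
  - rewrite tr_lt by auto. apply x_init_formula; auto.
  - rewrite tr_ge by auto. rewrite <- class_step with (t := t) by auto. f_equal. f_equal.
    rewrite !sum1_sumL. apply sumL_ext_in. intros j Hj. apply in_seq in Hj.
    fold (xa m i (t - j)). rewrite IH by lia. reflexivity.
Qed.

Lemma y_formula n : y m n = y_closed m n.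
Proof.
  induction n as [n IH] using (well_founded_induction lt_wf).
  assert (Hi : (n mod rho m < rho m)%nat) by (apply Nat.mod_upper_bound; lia).
  unfold y. destruct (Nat.lt_ge_cases n (hh m)) as [Hn|Hn].
  - rewrite tr_lt by auto. unfold y_init. rewrite xa_formula by auto. reflexivity.
  - rewrite tr_ge by auto.
    set (i := (n mod rho m)%nat) in *. set (q := (n / rho m)%nat).
    assert (Hkq : (kk m <= q)%nat) by (apply Nat.div_le_lower_bound; unfold hh in Hn; lia).
    pose proof (Nat.div_mod_eq n (rho m)) as Hdm. fold i q in Hdm.
    unfold y_closed. fold i q. rewrite <- class_step with (t := (1 + q)%nat) by (auto; lia).
    f_equal. f_equal. rewrite !sum1_sumL. unfold hh at 1.
    rewrite (sumL_ext_in _ _ (fun f => if ((f mod rho m =? 0) && (1 <=? f / rho m) && (f / rho m <=? kk m))%nat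
                                        then abar m (f / rho m)%nat * INR (y_closed m (n - f)) else 0%R)).
    2:{ intros f Hf. apply in_seq in Hf. fold (y m (n - f)). rewrite IH by (unfold hh in Hn; lia). unfold bw.
        destruct (_ && _)%bool; lra. }
    rewrite sumL_reindex_multiples by lia. apply sumL_ext_in. intros j Hj. apply in_seq in Hj.
    rewrite Nat.mul_comm, Nat.div_mul by lia. f_equal. f_equal. unfold y_closed.
    replace (n - j * rho m)%nat with (i + (q - j) * rho m)%nat by nia.
    rewrite Nat.Div0.mod_add, Nat.div_add, (Nat.mod_small i), (Nat.div_small i) by lia.
    replace (1 + (0 + (q - j)))%nat with (1 + q - j)%nat by lia. reflexivity.
Qed.

Lemma y01 n : y m n = 0%nat \/ y m n = 1%nat.
Proof. rewrite y_formula. unfold y_closed, resid_ind. destruct (_ =? _)%nat; auto. Qed.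

End ClosedForms.

(** ** The support of y: one residue class modulo rho p_r on each class r mod rho *)

Section Support.
Local Open Scope nat_scope.
Variable m : nat.
Hypothesis Hr : 2 <= rho m.

Definition period (r : nat) : nat := rho m * pr m r.
Definition phase (r : nat) : nat := r + rho m * (kk m mod pr m r).

Lemma phase_lt r : r < rho m -> phase r < period r.
Proof.
  intros Hrr. unfold phase, period. pose proof (pr_gt_2rho m r Hrr).
  pose proof (Nat.mod_upper_bound (kk m) (pr m r) ltac:(lia)). nia.
Qed.

Lemma support_class n r : r < rho m ->
  ((y m n =? 1) && (n mod rho m =? r)) = ((n + rho m) mod period r =? phase r).
Proof.
  intros Hrr. unfold period, phase. pose proof (pr_gt_2rho m r Hrr) as Hp.
  rewrite y_formula by auto. unfold y_closed, resid_ind.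
  rewrite Nat.Div0.mod_mul_r.
  replace (n + rho m) with (n + 1 * rho m) by lia.
  rewrite Nat.Div0.mod_add, Nat.div_add by lia.
  assert (Hnr : n mod rho m < rho m) by (apply Nat.mod_upper_bound; lia).
  pose proof (Nat.mod_upper_bound (n / rho m + 1) (pr m r) ltac:(lia)).
  pose proof (Nat.mod_upper_bound (kk m) (pr m r) ltac:(lia)).
  destruct (Nat.eqb_spec (n mod rho m) r) as [E|E].
  - rewrite E, andb_true_r, (Nat.add_comm (n / rho m) 1).
    destruct (Nat.eqb_spec ((1 + n / rho m) mod pr m r) (kk m mod pr m r)) as [E2|E2].
    + rewrite E2. symmetry. apply Nat.eqb_refl.
    + symmetry. apply Nat.eqb_neq. intros Hc. apply E2. nia.
  - rewrite andb_false_r. symmetry. apply Nat.eqb_neq. intros Hc. apply E.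
    apply (f_equal (fun x => x mod rho m)) in Hc.
    rewrite (Nat.mul_comm (rho m) (_ mod pr m r)), (Nat.mul_comm (rho m) (kk m mod pr m r)),
      !Nat.Div0.mod_add, Nat.Div0.mod_mod, (Nat.mod_small r) in Hc; auto.
Qed.

Lemma support_divides a b : y m a = 1 -> y m b = 1 -> a mod rho m = b mod rho m -> a <= b ->
  Nat.divide (period (a mod rho m)) (b - a).
Proof.
  intros Ha Hb Hab Hle.
  assert (Hrr : a mod rho m < rho m) by (apply Nat.mod_upper_bound; lia).
  assert (Hcls : forall n, y m n = 1 -> n mod rho m = a mod rho m ->
                   (n + rho m) mod period (a mod rho m) = phase (a mod rho m)).
  { intros n Hn Hnm. apply Nat.eqb_eq. rewrite <- support_class by auto.
    rewrite Hn, Hnm, !Nat.eqb_refl. reflexivity. }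
  replace (b - a) with ((b + rho m) - (a + rho m)) by lia.
  apply mod_eq_divide; [unfold period; pose proof (pr_gt_2rho m _ Hrr); nia| |lia].
  rewrite !Hcls; auto.
Qed.

Lemma p_prod_gt_k i j : i < rho m -> j < rho m -> kk m < pr m i * pr m j.
Proof.
  intros Hi Hj. destruct (pr_facts m i Hi) as [_ [Hi1 _]]. destruct (pr_facts m j Hj) as [_ [Hj1 _]].
  pose proof (rho_bound m). unfold kk.
  assert ((2 * m + 1) * (2 * m + 1) <= pr m i * pr m j) by nia. nia.
Qed.

Lemma support_shift_unique a b c :
  y m a = 1 -> y m (a + c) = 1 -> y m b = 1 -> y m (b + c) = 1 ->
  a mod rho m = b mod rho m -> a <= b -> b - a < hh m ->
  (forall q, c = rho m * q -> ~ Nat.divide (pr m (a mod rho m)) q) -> a = b.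
Proof.
  intros Ha Hac Hb Hbc Hab Hle Hlt Hc.
  assert (Hbc' : (b + c) mod rho m = (a + c) mod rho m)
    by (rewrite <- (Nat.Div0.add_mod_idemp_l b), <- Hab, Nat.Div0.add_mod_idemp_l; reflexivity).
  set (r := a mod rho m) in *. set (r' := (a + c) mod rho m) in *.
  assert (Hrr : r < rho m) by (apply Nat.mod_upper_bound; lia).
  assert (Hrr' : r' < rho m) by (apply Nat.mod_upper_bound; lia).
  destruct (support_divides a b Ha Hb Hab Hle) as [x Hx]. fold r in Hx. unfold period in Hx.
  destruct (Nat.eq_dec r' r) as [E|E].
  - exfalso. destruct (support_divides a (a + c) Ha Hac ltac:(fold r r'; congruence) ltac:(lia))
      as [c' Hc']. fold r in Hc'. unfold period in Hc'.
    apply (Hc (c' * pr m r)); [nia|]. exists c'. reflexivity.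
  - destruct (support_divides (a + c) (b + c) Hac Hbc ltac:(fold r'; congruence) ltac:(lia))
      as [x' Hx']. fold r' in Hx'. unfold period in Hx'.
    replace (b + c - (a + c)) with (b - a) in Hx' by lia.
    assert (Hdiv : Nat.divide (pr m r') (x * pr m r)).
    { exists x'. apply (Nat.mul_cancel_l _ _ (rho m)); [lia|nia]. }
    apply pr_divide_mul_other in Hdiv as [y' Hy']; auto. subst x.
    destruct y' as [|y']; [lia|]. exfalso.
    pose proof (p_prod_gt_k r r' Hrr Hrr'). unfold hh in Hlt. nia.
Qed.

End Support.

(** ** Window counts: N(t) < Tot(d) *)

Lemma fold_lcm_nonzero l acc :
  acc <> 0%nat -> (forall x, In x l -> x <> 0%nat) -> fold_left Nat.lcm l acc <> 0%nat.
Proof.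
  revert acc; induction l as [|a l IH]; simpl; intros acc Ha Hl; auto.
  apply IH; auto. intros Hc. apply Nat.lcm_eq_0 in Hc as [Hc|Hc]; [lia|]. apply (Hl a); auto.
Qed.

Lemma fold_lcm_least l acc s : Nat.divide acc s -> (forall x, In x l -> Nat.divide x s) ->
  Nat.divide (fold_left Nat.lcm l acc) s.
Proof.
  revert acc; induction l as [|a l IH]; simpl; intros acc Ha Hl; auto.
  apply IH; auto. apply Nat.lcm_least; auto.
Qed.

Definition lcm_primes (m d : nat) : nat := fold_left Nat.lcm (map (pr m) (seq 0 (S d))) 1%nat.

Definition T0 (m d : nat) : nat := (hh m + L1 m d - rho m)%nat.

Lemma hh_ge_rho m : (rho m <= hh m)%nat.
Proof.
  unfold hh, kk. pose proof (rho_bound m).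
  destruct (rho m) as [|r]; [lia|]. assert (1 <= 6 * m - 1)%nat by lia. nia.
Qed.

Section Windows.
Local Open Scope nat_scope.
Variable m : nat.
Hypothesis Hr : 2 <= rho m.
Variable d : nat.
Hypothesis Hd : d <= rho m - 1.

Lemma lcm_primes_pos : 1 <= lcm_primes m d.
Proof.
  enough (lcm_primes m d <> 0) by lia. apply fold_lcm_nonzero; auto.
  intros x Hx. apply in_map_iff in Hx as [i [<- Hi]]. apply in_seq in Hi.
  pose proof (pr_gt_2rho m i ltac:(lia)). lia.
Qed.

Lemma lcm_witness q : 1 <= q < lcm_primes m d -> exists r0, r0 <= d /\ ~ Nat.divide (pr m r0) q.
Proof.
  intros Hq. apply NNPP. intros Hall.
  assert (Hdv : Nat.divide (lcm_primes m d) q).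
  { apply fold_lcm_least; [apply Nat.divide_1_l|]. intros x Hx.
    apply in_map_iff in Hx as [i [<- Hi]]. apply in_seq in Hi.
    apply NNPP. intros Hn. apply Hall. exists i. split; [lia|auto]. }
  apply Nat.divide_pos_le in Hdv; lia.
Qed.

Lemma T0_ge : hh m <= T0 m d.
Proof. unfold T0, L1. fold (lcm_primes m d). pose proof lcm_primes_pos. nia. Qed.

Lemma quotient_ge_2rho r : r < rho m -> 2 * rho m <= (kk m - 1) / pr m r.
Proof.
  intros Hrr. destruct (pr_facts m r Hrr) as [_ [H1 H2]].
  apply Nat.div_le_lower_bound; [lia|]. unfold kk. nia.
Qed.

Lemma class_count_upper r t : r < rho m -> hh m <= t ->
  cnt (fun f => (y m (t - f) =? 1) && ((t - f) mod rho m =? r)) (seq 1 (hh m))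
  <= (kk m - 1) / pr m r + 1.
Proof.
  intros Hrr Ht. pose proof (pr_gt_2rho m r Hrr) as Hp.
  rewrite (cnt_ext_in _ (fun f => (fun n => (n + rho m) mod period m r =? phase m r) (t - f)))
    by (intros; apply support_class; auto).
  rewrite (cnt_rev_window (fun n => (n + rho m) mod period m r =? phase m r) t (hh m)),
    (cnt_shift (fun n => n mod period m r =? phase m r)) by auto.
  apply cnt_residue_upper; [unfold period; nia|apply phase_lt; auto|].
  unfold period, hh.
  pose proof (Nat.div_mod_eq (kk m - 1) (pr m r)).
  pose proof (Nat.mod_upper_bound (kk m - 1) (pr m r) ltac:(lia)). nia.
Qed.

Lemma class_count_B0 r : r < rho m ->
  (kk m - 1) / pr m r <= cnt (fun g => inB0 m d g && ((T0 m d - g) mod rho m =? r)) (seq 1 (hh m - d)).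
Proof.
  intros Hrr. pose proof (pr_gt_2rho m r Hrr) as Hp. pose proof T0_ge.
  rewrite (cnt_ext_in _ (fun g => (fun n => (n + rho m) mod period m r =? phase m r) (T0 m d - g))).
  2:{ intros g Hg. apply in_seq in Hg. unfold inB0. fold (T0 m d).
      rewrite (proj2 (Nat.leb_le 1 g)), (proj2 (Nat.leb_le g (hh m - d))) by lia.
      apply support_class; auto. }
  rewrite (cnt_rev_window (fun n => (n + rho m) mod period m r =? phase m r) (T0 m d) (hh m - d)),
    (cnt_shift (fun n => n mod period m r =? phase m r)) by lia.
  apply cnt_residue_lower; [unfold period; nia|apply phase_lt; auto|].
  unfold period, hh. pose proof (Nat.div_mod_eq (kk m - 1) (pr m r)).
  assert (1 <= kk m) by (unfold kk; pose proof (rho_bound m); nia). nia.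
Qed.

Lemma good_class_exists t : hh m <= t < T0 m d ->
  exists r0, r0 <= d /\
    forall l q, l <= d -> T0 m d - t + l = rho m * q -> ~ Nat.divide (pr m r0) q.
Proof.
  intros Ht. pose proof lcm_primes_pos. pose proof (hh_ge_rho m).
  assert (HT0 : T0 m d = hh m + rho m * lcm_primes m d - rho m) by reflexivity.
  destruct (classic (exists l0 q0, l0 <= d /\ T0 m d - t + l0 = rho m * q0))
    as [[l0 [q0 [Hl0 Hq0]]]|Hno].
  - destruct (lcm_witness q0) as [r0 [Hr0 Hndiv]]; [nia|].
    exists r0. split; auto. intros l q Hl Hq.
    enough (q = q0) by congruence. nia.
  - exists 0. split; [lia|]. intros l q Hl Hq. exfalso. eauto.
Qed.

(** On the good class, A(d)-hits are at most d + 1: one per shift l <= d. *)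
Lemma good_class_count t r0 : hh m <= t < T0 m d -> r0 < rho m ->
  (forall l q, l <= d -> T0 m d - t + l = rho m * q -> ~ Nat.divide (pr m r0) q) ->
  cnt (fun f => inA m d f && (y m (t - f) =? 1) && ((t - f) mod rho m =? r0)) (seq 1 (hh m))
  <= S d.
Proof.
  intros Ht Hr0 Hgood.
  rewrite (cnt_ext_in _ (fun f => existsb (fun l => (l <? f) && inB0 m d (f - l)) (seq 0 (S d))
                                 && ((y m (t - f) =? 1) && ((t - f) mod rho m =? r0))))
    by (intros f _; unfold inA; rewrite andb_assoc; reflexivity).
  eapply Nat.le_trans; [apply (cnt_existsb (fun l f => (l <? f) && inB0 m d (f - l)))|].
  rewrite <- (length_seq (S d) 0) at 2. apply natsum_le_length. intros l Hl. apply in_seq in Hl.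
  apply cnt_le1; [apply seq_NoDup|].
  assert (Hpt : forall f, In f (seq 1 (hh m)) ->
            (l <? f) && inB0 m d (f - l) && ((y m (t - f) =? 1) && ((t - f) mod rho m =? r0)) = true ->
            y m (t - f) = 1 /\ y m (t - f + (T0 m d - t + l)) = 1 /\ (t - f) mod rho m = r0).
  { intros f Hf H. apply in_seq in Hf. unfold inB0 in H. fold (T0 m d) in H.
    rewrite !andb_true_iff, Nat.ltb_lt, !Nat.leb_le, !Nat.eqb_eq in H.
    destruct H as [[Hlf [[_ _] HB]] [Hy Hc]]. pose proof T0_ge.
    replace (t - f + (T0 m d - t + l)) with (T0 m d - (f - l)) by lia. auto. }
  assert (Hord : forall f1 f2, In f1 (seq 1 (hh m)) -> In f2 (seq 1 (hh m)) -> f2 <= f1 ->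
            (l <? f1) && inB0 m d (f1 - l) && ((y m (t - f1) =? 1) && ((t - f1) mod rho m =? r0)) = true ->
            (l <? f2) && inB0 m d (f2 - l) && ((y m (t - f2) =? 1) && ((t - f2) mod rho m =? r0)) = true ->
            f1 = f2).
  { intros f1 f2 Hf1 Hf2 Hle H1 H2.
    destruct (Hpt f1 Hf1 H1) as [Ya [Yac Ca]]. destruct (Hpt f2 Hf2 H2) as [Yb [Ybc Cb]].
    apply in_seq in Hf1, Hf2.
    enough (t - f1 = t - f2) by lia.
    apply (support_shift_unique m Hr _ _ (T0 m d - t + l)); auto; try congruence; try lia.
    rewrite Ca. intros q Hq. apply (Hgood l q); auto; lia. }
  intros f1 f2 Hf1 Hf2 H1 H2. destruct (Nat.le_ge_cases f2 f1); [|symmetry]; apply Hord; auto.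
Qed.

Lemma count_A_support t : hh m <= t < T0 m d ->
  cnt (fun f => inA m d f && (y m (t - f) =? 1)) (seq 1 (hh m)) + 1 <= Tot m d.
Proof.
  intros Ht. destruct (good_class_exists t Ht) as [r0 [Hr0d Hgood]].
  unfold Tot. fold (cnt (inB0 m d) (seq 1 (hh m - d))).
  rewrite (cnt_classes _ (fun f => (t - f) mod rho m) (rho m)),
    (cnt_classes (inB0 m d) (fun g => (T0 m d - g) mod rho m) (rho m))
    by (intros; apply Nat.mod_upper_bound; lia).
  enough (natsum (seq 0 (rho m)) (fun r => cnt (fun f => inA m d f && (y m (t - f) =? 1)
                                             && ((t - f) mod rho m =? r)) (seq 1 (hh m))) + (rho m + 1)
          <= natsum (seq 0 (rho m)) (fun r => cnt (fun g => inB0 m d g && ((T0 m d - g) mod rho m =? r))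
                                             (seq 1 (hh m - d)) + 1))
    by (rewrite natsum_plus, natsum_const, length_seq in *; lia).
  apply (natsum_le_gain _ _ _ r0); [apply seq_NoDup|apply in_seq; lia| |].
  - intros r Hrr. apply in_seq in Hrr.
    pose proof (class_count_upper r t ltac:(lia) ltac:(lia)). pose proof (class_count_B0 r ltac:(lia)).
    enough (cnt (fun f => inA m d f && (y m (t - f) =? 1) && ((t - f) mod rho m =? r)) (seq 1 (hh m))
            <= cnt (fun f => (y m (t - f) =? 1) && ((t - f) mod rho m =? r)) (seq 1 (hh m))) by lia.
    apply cnt_le. intros f _ Hf. rewrite !andb_true_iff in *. tauto.
  - pose proof (good_class_count t r0 Ht ltac:(lia) Hgood). pose proof (class_count_B0 r0 ltac:(lia)).
    pose proof (quotient_ge_2rho r0 ltac:(lia)). lia.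
Qed.

End Windows.

Section Perturbation.
Local Open Scope R_scope.

Lemma sumL_integer l g : (forall x, exists z, g x = IZR z) -> exists z, sumL l g = IZR z.
Proof.
  intros H. induction l as [|a l [z1 Hz1]]; [exists 0%Z; reflexivity|].
  destruct (H a) as [z2 Hz2]. exists (z2 + z1)%Z.
  change (sumL (a :: l) g) with (g a + sumL l g). rewrite Hz1, Hz2, plus_IZR. reflexivity.
Qed.

Lemma bw_integer m f : exists z, bw m f = IZR z.
Proof.
  unfold bw, abar. destruct (_ && _)%bool; [|exists 0%Z; reflexivity].
  destruct (ell_of m _); [|exists 0%Z; reflexivity].
  destruct (Nat.even _); repeat destruct (_ <=? _)%nat; eexists; reflexivity.
Qed.

Lemma threshold_perturbation S th lam b N T :
  (exists zS, S - th = IZR zS) -> -1 <= lam -> lam < 0 -> 0 < T -> b * T = lam ->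
  0 <= N -> N + 1 <= T ->
  ind (S + b * N - (th + (lam - b / 8))) = ind (S - th).
Proof.
  intros [zS HzS] Hl1 Hl2 HT Hb HN HNT.
  assert (Hbn : b < 0) by nra.
  unfold ind. destruct (Rle_dec 0 (S - th)) as [H0|H0].
  - destruct (Rle_dec 0 (S + b * N - (th + (lam - b / 8)))) as [|Hn]; [reflexivity|].
    exfalso. apply Hn. rewrite <- Hb. nra.
  - destruct (Rle_dec 0 (S + b * N - (th + (lam - b / 8)))) as [H1|]; [|reflexivity].
    exfalso. assert (Hint : S - th <= -1).
    { rewrite HzS in *. apply Rnot_le_lt, lt_IZR in H0. apply IZR_le. lia. }
    nra.
Qed.

End Perturbation.

(** The potential of y (integer weights times 0/1 values, minus 2 rho) is an integer. *)
Lemma y_potential_integer m t :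
  exists zS, sum1 (hh m) (fun f => bw m f * INR (y m (t - f))) - thetabar m = IZR zS.
Proof.
  destruct (sumL_integer (seq 1 (hh m)) (fun f => bw m f * INR (y m (t - f)))) as [zS HzS].
  - intros f. destruct (bw_integer m f) as [z1 Hz1]. exists (z1 * Z.of_nat (y m (t - f)))%Z.
    rewrite Hz1, mult_IZR, <- INR_IZR_INZ. reflexivity.
  - exists (zS - Z.of_nat (2 * rho m))%Z. unfold thetabar.
    rewrite minus_IZR, <- INR_IZR_INZ, sum1_sumL, HzS. reflexivity.
Qed.

Lemma z_step m lam d t : (2 <= rho m)%nat -> -1 <= lam -> lam < 0 -> (d <= rho m - 1)%nat ->
  (hh m <= t < T0 m d)%nat ->
  (forall f, (1 <= f <= hh m)%nat -> z lam m (t - f) d = y m (t - f)) ->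
  z lam m t d = y m t.
Proof.
  intros Hr Hl1 Hl2 Hd Ht IH.
  set (N := cnt (fun f => inA m d f && (y m (t - f) =? 1))%nat (seq 1 (hh m))).
  set (S := sum1 (hh m) (fun f => bw m f * INR (y m (t - f)))).
  assert (Hcount : (N + 1 <= Tot m d)%nat) by (apply count_A_support; auto).
  assert (Hsum : sum1 (hh m) (fun f => cw lam m d f * INR (z lam m (t - f) d))
                 = S + betad lam m d * INR N).
  { unfold S, N. rewrite <- sumL_cnt, <- sumL_scal_l, !sum1_sumL, <- sumL_plus.
    apply sumL_ext_in. intros f Hf. apply in_seq in Hf. rewrite IH by lia.
    unfold cw. destruct (y01 m Hr (t - f)) as [E|E]; rewrite E; simpl INR;
      destruct (inA m d f); simpl; lra. }
  transitivity (ind (sum1 (hh m) (fun f => cw lam m d f * INR (z lam m (t - f) d)) - theta2 lam m d));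
    [unfold z; apply tr_ge; lia|].
  replace (y m t) with (ind (S - thetabar m)) by (unfold y, S; symmetry; apply tr_ge; lia).
  rewrite Hsum. unfold theta2, xi.
  assert (HNT : INR N + 1 <= INR (Tot m d)) by (rewrite <- S_INR; apply le_INR; lia).
  assert (HT : 0 < INR (Tot m d)) by (pose proof (pos_INR N); lra).
  apply threshold_perturbation with (T := INR (Tot m d)); auto using pos_INR.
  - apply y_potential_integer.
  - unfold betad. field. lra.
Qed.

(** Strong induction on t with [z_step]. *)
Theorem lemma17 (m : nat) (lam : R) :
  (1 <= m)%nat -> (2 <= rho m)%nat ->
  -1 <= lam -> lam < 0 ->
  forall d t : nat,
    (d <= rho m - 1)%nat ->
    (t <= L1 m d + hh m - 1 - rho m)%nat ->
    z lam m t d = y m t.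
Proof.
  intros _ Hr Hl1 Hl2 d t Hd Ht.
  assert (Hbound : (t < T0 m d)%nat).
  { pose proof (lcm_primes_pos m Hr d Hd). pose proof (hh_ge_rho m).
    unfold T0, L1 in *. fold (lcm_primes m d) in *. nia. }
  clear Ht. induction t as [t IH] using (well_founded_induction lt_wf).
  destruct (Nat.lt_ge_cases t (hh m)) as [Hth|Hth].
  - unfold z. rewrite tr_lt by auto. reflexivity.
  - apply z_step; auto. intros f Hf. apply IH; lia.
Qed.
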